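(* Let $n\ge 4$ and let $W_n$ be the wheel graph on $n$ vertices, with incidence matrix \[M=\left[\begin{array}{c|c} \mathbf{1}^T & \mathbf{0}^T \\ \hline I_{n-1} & C \end{array}\right],\] where $C$ is the circulant matrix $\mathrm{circ}(1,0,\ldots,0,1)$ of order $n-1$. Then $CC^T+I_{n-1}$ is invertible and the Moore–Penrose inverse of $M$ is \[M^+=\frac{1}{2(n-1)} \left[\begin{array}{r|c} 2\mathbf{1} & X \\ \hline -\mathbf{1} & Y \end{array}\right],\] where $X=2(CC^T+I_{n-1})^{-1}\left[ (n-1)I_{n-1}-J_{n-1}\right]$ and $Y= J_{n-1}+C^TX$.
   Context: The wheel graph $W_n$ ($n\ge4$) is obtained from a cycle on $n-1$ vertices and an extra vertex $v$ by joining $v$ to every vertex of the cycle. The (vertex-edge) incidence matrix of a graph has $(i,j)$-entry $1$ if vertex $i$ is incident with edge $e_j$ and $0$ otherwise; the displayed block form corresponds to listing the hub $v$ first, then the cycle vertices $1,\dots,n-1$ in cyclic order, and listing the $n-1$ spokes first (spoke $j$ joining $v$ to cycle vertex $j$) followed by the cycle edges. For $c_0,\dots,c_{k-1}$, $\mathrm{circ}(c_0,c_1,\ldots,c_{k-1})$ denotes the $k\times k$ circulant matrix whose $(i,j)$-entry is $c_{(j-i)\bmod k}$ (first row $c_0,\dots,c_{k-1}$, each subsequent row the cyclic right shift of the previous). $\mathbf{1}$ is the all-ones column vector of length $n-1$, $\mathbf{0}$ the zero vector, $J_{n-1}$ the $(n-1)\times(n-1)$ all-ones matrix, $I_{n-1}$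 the identity. The Moore–Penrose inverse $A^+$ of a real matrix $A$ is the unique matrix satisfying $AA^+A=A$, $A^+AA^+=A^+$, $(AA^+)^T=AA^+$, $(A^+A)^T=A^+A$. *)

From HB Require Import structures.
From mathcomp Require Import all_boot all_order all_algebra.
Set Implicit Arguments. Unset Strict Implicit. Unset Printing Implicit Defensive.
Import Order.TTheory GRing.Theory Num.Theory.
Local Open Scope ring_scope.

Definition circ (R : nzRingType) (k : nat) (c : nat -> R) : 'M[R]_k :=
  \matrix_(i < k, j < k) c ((j + k - i) %% k)%N.

Definition wheelC (R : nzRingType) (k : nat) : 'M[R]_k :=
  circ k (fun t => if (t == 0)%N || (t == k.-1)%N then 1 else 0).

(* Incidence matrix of the wheel W_n (block form, m = n-1):
   rows: hub, then cycle vertices 1..m; columns: m spokes, then m cycle edges. *)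
Definition wheel_incidence (R : nzRingType) (n : nat) :
  'M[R]_(1 + n.-1, n.-1 + n.-1) :=
  block_mx (const_mx 1) (const_mx 0) (1%:M) (wheelC R n.-1).

Definition is_MP_inverse (R : nzRingType) (p q : nat)
  (A : 'M[R]_(p, q)) (B : 'M[R]_(q, p)) : Prop :=
  [/\ A *m B *m A = A, B *m A *m B = B,
      (A *m B)^T = A *m B & (B *m A)^T = B *m A].

Definition wheel_X (R : fieldType) (n : nat) : 'M[R]_(n.-1) :=
  let C := wheelC R n.-1 in
  2%:R *: (invmx (C *m C^T + 1%:M) *m ((n.-1)%:R *: 1%:M - const_mx 1)).

Definition wheel_Y (R : fieldType) (n : nat) : 'M[R]_(n.-1) :=
  const_mx 1 + (wheelC R n.-1)^T *m wheel_X R n.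

Definition wheel_pinv (R : fieldType) (n : nat) :
  'M[R]_(n.-1 + n.-1, 1 + n.-1) :=
  (2 * (n.-1)%:R)^-1 *:
    block_mx (2%:R *: const_mx 1) (wheel_X R n) (- const_mx 1) (wheel_Y R n).

From HB Require Import structures.
From mathcomp Require Import all_boot all_order all_algebra.
From mathcomp Require Import perm zify.
Set Implicit Arguments. Unset Strict Implicit. Unset Printing Implicit Defensive.
Import Order.TTheory GRing.Theory Num.Theory.
Local Open Scope ring_scope.

(* A right inverse P of M for which P M is symmetric satisfies all four Penrose
   equations, so it suffices to check M P = I and (P M)^T = P M blockwise.
   Only two facts about C are used: every row and every column of C sums to 2
   (C is the incidence matrix of a 2-regular graph, M that of its cone), and
   A = C C^T + I is invertible, which holds over any ordered field because
   v A v^T = |v C|^2 + |v|^2.  The row and column sums make A commute with J,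
   so A^-1 commutes with Q = (n-1) I - J; hence 1^T X = 0, X^T = X and A X = 2 Q,
   and the blocks of M P and P M reduce to these identities. *)

Lemma mul_const_mx (R : pzSemiRingType) m n p (a b : R) :
  (const_mx a : 'M_(m, n)) *m (const_mx b : 'M_(n, p)) = const_mx (a * b *+ n).
Proof.
apply/matrixP => i j; rewrite !mxE.
by under eq_bigr do rewrite !mxE; rewrite sumr_const card_ord.
Qed.

Lemma comm_mx_invmx (R : comUnitRingType) n (A B : 'M[R]_n) :
  A \in unitmx -> comm_mx A B -> comm_mx (invmx A) B.
Proof.
move=> A_unit AB; rewrite /comm_mx -[LHS]mulmx1 -(mulmxV A_unit) !mulmxA.
by rewrite -[invmx A *m B *m A]mulmxA -AB mulmxA mulVmx // mul1mx.
Qed.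

Lemma is_MP_inverse_right_inverse (R : nzRingType) p q (A : 'M[R]_(p, q)) B :
  A *m B = 1%:M -> (B *m A)^T = B *m A -> is_MP_inverse A B.
Proof.
move=> AB BA_sym; split=> //; first by rewrite AB mul1mx.
- by rewrite -mulmxA AB mulmx1.
- by rewrite AB trmx1.
Qed.

Section GramPlusIdentity.
Variable R : realFieldType.

Lemma mulmx_trE k (v : 'rV[R]_k) : (v *m v^T) 0 0 = \sum_j v 0 j ^+ 2.
Proof. by rewrite mxE; apply: eq_bigr => j _; rewrite mxE expr2. Qed.

Lemma mulmx_tr_ge0 k (v : 'rV[R]_k) : 0 <= (v *m v^T) 0 0.
Proof. by rewrite mulmx_trE sumr_ge0 // => j _; apply: sqr_ge0. Qed.

Lemma mulmx_tr_eq0 k (v : 'rV[R]_k) : ((v *m v^T) 0 0 == 0) = (v == 0).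
Proof.
apply/idP/eqP => [|->]; last by rewrite mul0mx mxE.
rewrite mulmx_trE => /eqP /psumr_eq0P v0; apply/rowP => j.
by apply/eqP; rewrite mxE -sqrf_eq0 v0 // => i _; apply: sqr_ge0.
Qed.

Lemma mulmx_tr_add1_unit m k (C : 'M[R]_(m, k)) : C *m C^T + 1%:M \in unitmx.
Proof.
set A := _ + _.
have ker0 (v : 'rV_m) : v *m A = 0 -> v = 0.
  move=> vA0; apply/eqP; rewrite -mulmx_tr_eq0.
  have : (v *m A *m v^T) 0 0 == 0 by rewrite vA0 mul0mx mxE.
  have -> : v *m A *m v^T = (v *m C) *m (v *m C)^T + v *m v^T.
    by rewrite mulmxDr mulmx1 mulmxDl trmx_mul !mulmxA.
  by rewrite mxE paddr_eq0 ?mulmx_tr_ge0 // => /andP[].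
rewrite -row_free_unit -kermx_eq0; apply/eqP/row_matrixP => i.
by rewrite row0; apply: ker0; rewrite -row_mul mulmx_ker row0.
Qed.

End GramPlusIdentity.

Section ConePseudoInverse.
Variables (R : fieldType) (m : nat) (C : 'M[R]_m).
Hypothesis C_rowsum : C *m const_mx 1 = const_mx 2 :> 'cV_m.
Hypothesis C_colsum : const_mx 1 *m C = const_mx 2 :> 'rV_m.
Hypothesis A_unit : C *m C^T + 1%:M \in unitmx.
Hypothesis two_m_neq0 : 2 * m%:R != 0 :> R.

Local Notation A := (C *m C^T + 1%:M).
Local Notation J := (const_mx 1 : 'M[R]_m).
Local Notation Q := (m%:R *: 1%:M - J).

Definition cone_incidence : 'M[R]_(1 + m, m + m) :=
  block_mx (const_mx 1) (const_mx 0) 1%:M C.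

Definition cone_X : 'M[R]_m := 2%:R *: (invmx A *m Q).

Definition cone_pinv : 'M[R]_(m + m, 1 + m) :=
  (2 * m%:R)^-1 *:
    block_mx (2%:R *: const_mx 1) cone_X (- const_mx 1) (J + C^T *m cone_X).

Lemma mulmx_const p (a : R) : C *m (const_mx a : 'M_(m, p)) = const_mx (2 * a).
Proof.
have -> : const_mx a = (const_mx 1 : 'cV_m) *m (const_mx a : 'M_(1, p)).
  by rewrite mul_const_mx mul1r.
by rewrite mulmxA C_rowsum mul_const_mx.
Qed.

Lemma const_mulmx p (a : R) : (const_mx a : 'M_(p, m)) *m C = const_mx (2 * a).
Proof.
have -> : const_mx a = (const_mx a : 'M_(p, 1)) *m (const_mx 1 : 'rV_m).
  by rewrite mul_const_mx mulr1.
by rewrite -mulmxA C_colsum mul_const_mx mulrC.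
Qed.

Lemma trmx_mulmx_const p (a : R) : C^T *m (const_mx a : 'M_(m, p)) = const_mx (2 * a).
Proof. by rewrite -[const_mx a]trmx_const -trmx_mul const_mulmx trmx_const. Qed.

Lemma const_mulmx_trmx p (a : R) : (const_mx a : 'M_(p, m)) *m C^T = const_mx (2 * a).
Proof. by rewrite -[const_mx a]trmx_const -trmx_mul mulmx_const trmx_const. Qed.

Lemma comm_A_J : A *m J = J *m A.
Proof.
rewrite mulmxDl mulmxDr -mulmxA trmx_mulmx_const mulmx_const.
by rewrite mulmxA const_mulmx const_mulmx_trmx mul1mx mulmx1.
Qed.

Lemma comm_invA_Q : invmx A *m Q = Q *m invmx A.
Proof.
apply: comm_mx_invmx => //; rewrite /comm_mx mulmxBr mulmxBl comm_A_J.
by rewrite -scalemxAl -scalemxAr mul1mx mulmx1.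
Qed.

Lemma const_mulmx_Q p (a : R) : (const_mx a : 'M_(p, m)) *m Q = 0.
Proof.
by rewrite mulmxBr -scalemxAr mulmx1 mul_const_mx scalemx_const mulr1 mulr_natl subrr.
Qed.

Lemma const_mulmx_cone_X p (a : R) : (const_mx a : 'M_(p, m)) *m cone_X = 0.
Proof.
by rewrite /cone_X -scalemxAr comm_invA_Q mulmxA const_mulmx_Q mul0mx scaler0.
Qed.

Lemma trmx_cone_X : cone_X^T = cone_X.
Proof.
have A_sym : A^T = A by rewrite linearD /= trmx_mul trmxK trmx1.
have Q_sym : Q^T = Q by rewrite linearB /= linearZ /= trmx1 trmx_const.
by rewrite /cone_X linearZ /= trmx_mul trmx_inv A_sym Q_sym comm_invA_Q.
Qed.

Lemma A_mulmx_cone_X : A *m cone_X = 2%:R *: Q.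
Proof. by rewrite -scalemxAr mulmxA mulmxV // mul1mx. Qed.

Lemma mul_cone_pinv : cone_incidence *m cone_pinv = 1%:M.
Proof.
rewrite /cone_pinv -scalemxAr.
suff -> : cone_incidence *m block_mx (2%:R *: const_mx 1) cone_X (- const_mx 1)
            (J + C^T *m cone_X) = (2 * m%:R)%:M.
  by rewrite scale_scalar_mx mulVf.
rewrite mulmx_block scalar_mx_block !mul0mx !addr0 mul1mx; congr block_mx.
- rewrite -scalemxAr mul_const_mx scalemx_const.
  by apply/matrixP => i j; rewrite !ord1 !mxE mulr1 mulr_natr.
- exact: const_mulmx_cone_X.
- by rewrite mulmxN mulmx_const mulr1 scalemx_const mulr1 subrr.
  rewrite mulmxDr mulmx_const mulmxA mul1mx addrCA.
  have -> : cone_X + C *m C^T *m cone_X = A *m cone_X by rewrite mulmxDl mul1mx addrC.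
  by rewrite A_mulmx_cone_X scalerBr scalerA scalemx1 scalemx_const addrC subrK.
Qed.

Lemma trmx_cone_pinv_mul :
  (cone_pinv *m cone_incidence)^T = cone_pinv *m cone_incidence.
Proof.
rewrite /cone_pinv -scalemxAl linearZ /=; congr (_ *: _).
rewrite mulmx_block tr_block_mx !mulmx0 !mulmx1 !add0r; congr block_mx.
- by rewrite -scalemxAl mul_const_mx scalemx_const linearD /= trmx_cone_X trmx_const.
- by rewrite mulNmx mul_const_mx mulr1 addKr trmx_mul trmxK trmx_cone_X.
- by rewrite mulNmx mul_const_mx mulr1 addKr trmx_mul trmx_cone_X.
- by rewrite mulmxDl const_mulmx linearD /= !trmx_mul trmxK trmx_cone_X trmx_const mulmxA.
Qed.

Theorem cone_pinvP : is_MP_inverse cone_incidence cone_pinv.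
Proof.
exact: is_MP_inverse_right_inverse mul_cone_pinv trmx_cone_pinv_mul.
Qed.

End ConePseudoInverse.

Lemma circ_index_eq (m i j k : nat) : (i < m)%N -> (j < m)%N -> (k < m)%N ->
  ((j + m - i) %% m == k)%N = (j == (i + k) %% m)%N.
Proof.
move=> lt_im lt_jm lt_km.
rewrite -{1}(modn_small lt_km) -(eqn_modDl i) subnKC; last lia.
by rewrite modnDr modn_small.
Qed.

Definition cycle_pred_perm m : 'S_m := perm (@ord_pred_inj m).

Lemma wheelC_perm (R : nzRingType) m : (2 <= m)%N ->
  wheelC R m = 1%:M + perm_mx (cycle_pred_perm m).
Proof.
move=> m_ge2; apply/matrixP => i j; rewrite !mxE permE.
have [lt_im lt_jm] := (ltn_ord i, ltn_ord j).
set k := ((j + m - i) %% m)%N.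
have k0 : (k == 0)%N = (i == j).
  rewrite circ_index_eq //; last lia.
  by rewrite (addn0 i) (modn_small lt_im) eq_sym.
have k1 : (k == m.-1)%N = (ord_pred i == j).
  rewrite circ_index_eq //; last lia.
  have -> : (i + m.-1 = (i + m).-1)%N by lia.
  by rewrite eq_sym.
rewrite -k0 -k1; case: (k =P 0)%N => [k_0|_]; case: (k =P m.-1) => [k_m|_] /=;
  rewrite ?addr0 ?add0r //; lia.
Qed.

Lemma wheelC_rowsum (R : nzRingType) m : (2 <= m)%N ->
  wheelC R m *m const_mx 1 = const_mx 2 :> 'cV_m.
Proof.
move=> m_ge2; rewrite wheelC_perm // mulmxDl mul1mx -row_permE row_perm_const.
by rewrite -raddfD.
Qed.

Lemma wheelC_colsum (R : nzRingType) m : (2 <= m)%N ->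
  const_mx 1 *m wheelC R m = const_mx 2 :> 'rV_m.
Proof.
move=> m_ge2; rewrite wheelC_perm // mulmxDr mulmx1 -[cycle_pred_perm m]invgK.
by rewrite -col_permE col_perm_const -raddfD.
Qed.

Theorem mainTheorem1 (R : realFieldType) (n : nat) (hn : (4 <= n)%N) :
  let C := wheelC R n.-1 in
  (C *m C^T + 1%:M) \in unitmx /\
  is_MP_inverse (wheel_incidence R n) (wheel_pinv R n).
Proof.
move=> C; have m_ge2 : (2 <= n.-1)%N by lia.
have A_unit := mulmx_tr_add1_unit C.
split=> //; apply: cone_pinvP => //.
- exact: wheelC_rowsum.
- exact: wheelC_colsum.
- by rewrite mulf_neq0 ?pnatr_eq0 -?lt0n //; lia.
Qed.
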